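(* Let $P$ be an $n\times n$ sign pattern and $A\in\mathcal{Q}(P)$. If $A$ is nilpotent and has the nSSP, then every superpattern of $P$ (including $P$ itself) is a spectrally arbitrary pattern.
   Context: A sign pattern is an array with entries in $\{+,-,0\}$; its qualitative class $\mathcal{Q}(P)$ is the set of real matrices of the same size whose entries have the signs prescribed by $P$. $P'$ is a superpattern of $P$ if $P'$ is obtained from $P$ by replacing some (possibly none) of its $0$ entries by $+$ or $-$. An $n\times n$ sign pattern $P$ is spectrally arbitrary if for every monic real polynomial $p$ of degree $n$ there is $A\in\mathcal{Q}(P)$ with characteristic polynomial $p$. $\circ$ is the entrywise product. A real $n\times n$ matrix $A$ has the nSSP if $X=O$ is the only real $n\times n$ matrix with $A\circ X=O$ and $AX^\top-X^\top A=O$. *)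

From HB Require Import structures.
From mathcomp Require Import all_boot all_order all_algebra.
From mathcomp Require Import reals.
Set Implicit Arguments. Unset Strict Implicit. Unset Printing Implicit Defensive.
Import Order.TTheory GRing.Theory Num.Theory.
Local Open Scope ring_scope.

Inductive sign := SPos | SNeg | SZero.

Definition sign_eqb (a b : sign) : bool :=
  match a, b with
  | SPos, SPos | SNeg, SNeg | SZero, SZero => true
  | _, _ => false end.
Lemma sign_eqP : Equality.axiom sign_eqb.
Proof. by case; case; constructor. Qed.
HB.instance Definition _ := hasDecEq.Build sign sign_eqP.

Definition sign_pattern (n : nat) := 'M[sign]_n.

Definition has_sign (R : realDomainType) (s : sign) (x : R) : bool :=
  match s with
  | SPos => 0 < x
  | SNeg => x < 0
  | SZero => x == 0
  end.

Definition in_qual_class (R : realDomainType) (n : nat)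
    (P : sign_pattern n) (A : 'M[R]_n) : Prop :=
  forall i j, has_sign (P i j) (A i j).

Definition superpattern (n : nat) (P P' : sign_pattern n) : Prop :=
  forall i j, P i j <> SZero -> P' i j = P i j.

Definition spectrally_arbitrary (R : realDomainType) (n : nat)
    (P : sign_pattern n) : Prop :=
  forall p : {poly R}, p \is monic -> size p = n.+1 ->
    exists A : 'M[R]_n, in_qual_class P A /\ char_poly A = p.

Definition hadamard (R : pzRingType) (n : nat) (A B : 'M[R]_n) : 'M[R]_n :=
  \matrix_(i, j) (A i j * B i j).

Definition nSSP (R : pzRingType) (n : nat) (A : 'M[R]_n) : Prop :=
  forall X : 'M[R]_n,
    hadamard A X = 0 -> A *m X^T - X^T *m A = 0 -> X = 0.

Definition nilpotent_mx (R : pzRingType) (n : nat) (A : 'M[R]_n) : Prop :=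
  exists k : nat, A ^+ k = 0.

From HB Require Import structures.
From mathcomp Require Import all_boot all_order all_algebra.
From mathcomp Require Import all_classical all_reals all_analysis.
From mathcomp Require Import ring lra.
Set Implicit Arguments. Unset Strict Implicit. Unset Printing Implicit Defensive.
Import Order.TTheory GRing.Theory Num.Theory.
Import numFieldNormedType.Exports.
Local Open Scope ring_scope.

(* Let A be nilpotent with the nSSP and E |-> supp_mask A E the restriction to
   the support of A.  The linear map nssp_map (E, K) = supp_mask E + A K - K A
   is onto: a matrix Y orthogonal to its image for the trace pairing satisfies
   A o Y = 0 and [A, Y^T] = 0, so Y = 0 by the nSSP.  A Banach fixed point
   argument then gives a quantitative implicit function theorem: for every C
   close to A and every small M there are E, small and supported on supp A, and
   K small with (A + M + E)(1 + K) = (1 + K) C.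
   Independently, a nilpotent matrix is similar to a strictly upper triangular
   one, hence (perturbing its superdiagonal and using a Krylov basis) it is
   close to W^-1 C(c) W for a fixed W and all companion matrices C(c) with
   small coefficients.  Given a monic p of degree n, the lower coefficients
   of s^n p(x / s) are small for small s > 0; choosing M with the signs of P'
   off the support of A and E smaller than the nonzero entries of A, the matrix
   s^-1 (A + M + E) lies in Q(P') and is similar to the companion matrix of p.
   The file develops, in order: max-norm estimates, the fixed point theorem,
   surjectivity of nssp_map, the perturbation theorem, triangularization of
   nilpotent matrices, companion and Krylov matrices, the approximation of A
   by conjugated companion matrices, the scaling, and the sign bookkeeping. *)

(* Real matrices are complete for the max-entry norm, so the Banach fixed
   point theorem applies to closed sets of matrices. *)
HB.instance Definition _ (R : realType) m n :=
  Uniform_isComplete.Build 'M[R]_(m, n) (@mx_complete R m n).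

Section MaxNorm.
Variable R : realType.

Lemma normr_entry m n (M : 'M[R]_(m, n)) i j : `|M i j| <= `|M|.
Proof.
have -> : `|M| = mx_norm M by [].
by rewrite mx_normrE; apply: le_trans (le_bigmax _ _ (i, j)).
Qed.

Lemma normr_mx_le m n (M : 'M[R]_(m, n)) c :
  0 <= c -> (forall i j, `|M i j| <= c) -> `|M| <= c.
Proof.
move=> c0 Mc; have -> : `|M| = mx_norm M by [].
by rewrite mx_normrE; apply/bigmax_leP; split => // -[i j] _; apply: Mc.
Qed.

Lemma normr_mulmx m n p (A : 'M[R]_(m, n)) (B : 'M[R]_(n, p)) :
  `|A *m B| <= n%:R * (`|A| * `|B|).
Proof.
apply: normr_mx_le => [|i j]; first by rewrite !mulr_ge0.
rewrite mxE; apply: le_trans (ler_norm_sum _ _ _) _.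
apply: le_trans (_ : \sum_(k < n) `|A| * `|B| <= _); last first.
  by rewrite sumr_const card_ord mulr_natl.
by apply: ler_sum => k _; rewrite normrM ler_pM ?normr_entry.
Qed.

Lemma normr_mulmx_le m n p (A : 'M[R]_(m, n)) (B : 'M[R]_(n, p)) a b :
  `|A| <= a -> `|B| <= b -> `|A *m B| <= n%:R * (a * b).
Proof.
move=> Aa Bb; apply: le_trans (normr_mulmx A B) _.
by rewrite ler_wpM2l // ler_pM.
Qed.

Lemma normr_mulmx3 n (P X Q : 'M[R]_n) :
  `|P *m X *m Q| <= n%:R ^+ 2 * (`|P| * `|X| * `|Q|).
Proof.
apply: le_trans (normr_mulmx _ _) _.
apply: le_trans (ler_wpM2l _ (ler_wpM2r _ (normr_mulmx P X))) _ => //.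
by rewrite expr2 -!mulrA.
Qed.

Lemma normr_lsubmx m n1 n2 (M : 'M[R]_(m, n1 + n2)) : `|lsubmx M| <= `|M|.
Proof. by apply: normr_mx_le => // i j; rewrite mxE normr_entry. Qed.

Lemma normr_rsubmx m n1 n2 (M : 'M[R]_(m, n1 + n2)) : `|rsubmx M| <= `|M|.
Proof. by apply: normr_mx_le => // i j; rewrite mxE normr_entry. Qed.

(* A small perturbation of the identity is invertible: a null vector v of
   1 + K would satisfy |v| = |v K| <= n |K| |v| < |v|. *)
Lemma unitmx_1addK n (K : 'M[R]_n) : `|K| * n%:R < 1 -> (1%:M + K) \in unitmx.
Proof.
move=> Ksmall; rewrite unitmxE unitfE; apply/negP => /det0P [v v0 vK].
have v_eq : v = - (v *m K).
  by apply/eqP; rewrite -addr_eq0 -{1}[v]mulmx1 -mulmxDr vK.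
have v_gt0 : 0 < `|v| by rewrite normr_gt0.
have := normr_mulmx v K; rewrite -normrN -v_eq mulrA [_ * `|v|]mulrC -mulrA.
by rewrite ler_pMr // mulrC leNgt Ksmall.
Qed.

End MaxNorm.

(* The Banach fixed point theorem for a contraction of a closed nonempty set
   of real matrices, phrased without the function-structure packaging. *)
Section ContractionFixedPoint.
Variables (R : realType) (m n : nat) (U : set 'M[R]_(m, n)).
Variable f : 'M[R]_(m, n) -> 'M[R]_(m, n).
Hypothesis fU : forall x, U x -> U (f x).
HB.instance Definition _ := isFun.Build _ _ U U f fU.

Lemma contraction_fixed_point (q : R) x0 : closed U -> U x0 -> 0 <= q -> q < 1 ->
  (forall x y, U x -> U y -> `|f x - f y| <= q * `|x - y|) ->
  exists2 p, U p & p = f p.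
Proof.
move=> cU Ux0 q0 q1 lip.
apply: (@banach_fixed_point R _ U [the {fun U >-> U} of f]) => //; last by exists x0.
by exists (NngNum q0); split => // -[x y] /= [Ux Uy]; apply: lip.
Qed.

End ContractionFixedPoint.

Section TracePairing.
Variable F : fieldType.

Lemma mxvec_trace_pairing m n (X Y : 'M[F]_(m, n)) :
  (mxvec X *m (mxvec Y)^T) 0 0 = \tr (X *m Y^T).
Proof.
rewrite mxE (reindex _ (curry_mxvec_bij _ _)) /= /mxtrace.
under [RHS]eq_bigr do rewrite mxE.
by rewrite pair_bigA; apply: eq_bigr => -[i j] _ /=; rewrite !mxE !mxvecE.
Qed.

Lemma mxtrace_delta_mul m n i j (B : 'M[F]_(n, m)) :
  \tr (delta_mx i j *m B) = B j i.
Proof.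
rewrite /mxtrace (bigD1 i) //= big1 ?addr0 => [|k ki]; last first.
  by rewrite mxE big1 // => l _; rewrite mxE (negbTE ki) mul0r.
rewrite mxE (bigD1 j) //= big1 ?addr0; first by rewrite mxE !eqxx mul1r.
by move=> k kj; rewrite mxE (negbTE kj) andbF mul0r.
Qed.

Lemma onto_of_trivial_annihilator p q n (f : {linear 'M[F]_(p, q) -> 'M[F]_n}) :
  (forall Y : 'M[F]_n, (forall z, \tr (f z *m Y^T) = 0) -> Y = 0) ->
  forall Y, exists z, f z = Y.
Proof.
move=> annihilator; pose M := lin_mx f.
suff full : row_full M.
  move=> Y; exists (vec_mx (mxvec Y *m pinvmx M)).
  apply: (can_inj (@mxvecK _ n n)).
  by rewrite -mul_vec_lin vec_mxK mulmxKpV // submx_full.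
apply: contraT => not_full.
have rankM : (\rank M < n * n)%N by rewrite ltn_neqAle rank_leq_col andbT.
have ker_nz : kermx M^T != 0.
  by rewrite -mxrank_eq0 mxrank_ker mxrank_tr -lt0n subn_gt0.
have [i vi] : exists i, row i (kermx M^T) != 0.
  apply/existsP; apply: contraR ker_nz => /existsPn rows0.
  by apply/eqP/row_matrixP => i; move: (rows0 i); rewrite negbK row0 => /eqP.
set v := row i _ in vi.
have vM : v *m M^T = 0 by rewrite /v -row_mul mulmx_ker row0.
have v0 : vec_mx v = 0.
  apply: annihilator => z; rewrite -mxvec_trace_pairing vec_mxK -mul_vec_lin.
  by rewrite -mulmxA -[_ *m v^T]trmxK trmx_mul trmxK vM trmx0 mulmx0 mxE.
by move: vi; rewrite -[v]vec_mxK v0 linear0 eqxx.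
Qed.

End TracePairing.

Section Linearization.
Variables (F : fieldType) (n : nat) (A : 'M[F]_n).

Definition supp_mask (E : 'M[F]_n) : 'M[F]_n :=
  \matrix_(i, j) (if A i j == 0 then 0 else E i j).

(* The differential at (0, 0) of (E, K) |-> (A + E)(1 + K) - (1 + K) A, with E
   supported on the support of A; the pair (E, K) is stored as [E | K]. *)
Definition nssp_map (z : 'M[F]_(n, n + n)) : 'M[F]_n :=
  supp_mask (lsubmx z) + A *m rsubmx z - rsubmx z *m A.

Lemma supp_maskB E1 E2 : supp_mask E1 - supp_mask E2 = supp_mask (E1 - E2).
Proof. by apply/matrixP => i j; rewrite !mxE; case: (A i j == 0); rewrite ?subr0. Qed.

Lemma supp_mask_idem E : supp_mask (supp_mask E) = supp_mask E.
Proof. by apply/matrixP => i j; rewrite !mxE; case: (A i j == 0). Qed.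

Lemma nssp_map_linear : linear nssp_map.
Proof.
move=> a u v; rewrite /nssp_map !linearD !linearZ /= mulmxDl -scalemxAl.
move: (A *m rsubmx u) (A *m rsubmx v) (rsubmx u *m A) (rsubmx v *m A) => p1 p2 p3 p4.
by apply/matrixP => i j; rewrite !mxE; case: (A i j == 0); ring.
Qed.

HB.instance Definition _ :=
  GRing.isLinear.Build F 'M[F]_(n, n + n) 'M[F]_n _ nssp_map nssp_map_linear.

(* A matrix orthogonal to the image of nssp_map is a witness against the nSSP:
   testing against (E, 0) gives A o Y = 0, testing against (0, K) gives
   [A, Y^T] = 0. *)
Lemma nssp_map_annihilator (Y : 'M[F]_n) : nSSP A ->
  (forall z, \tr (nssp_map z *m Y^T) = 0) -> Y = 0.
Proof.
move=> nssp orth; apply: nssp.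
- apply/matrixP => k l; rewrite !mxE.
  have [->|Akl] := eqVneq (A k l) 0; first by rewrite mul0r.
  have := orth (row_mx (delta_mx k l) 0).
  rewrite /nssp_map row_mxKl row_mxKr mulmx0 mul0mx subr0 addr0.
  have -> : supp_mask (delta_mx k l) = delta_mx k l.
    apply/matrixP => a b; rewrite !mxE.
    case: eqP => // Aab; case: eqP => [ak|] //=.
    by case: eqP => // bl; move: Aab; rewrite ak bl => /eqP; rewrite (negbTE Akl).
  by rewrite mxtrace_delta_mul mxE => ->; rewrite mulr0.
- apply/matrixP => k l; have := orth (row_mx 0 (delta_mx l k)).
  rewrite /nssp_map row_mxKl row_mxKr.
  have -> : supp_mask 0 = 0 by apply/matrixP => a b; rewrite !mxE; case: eqP.
  rewrite add0r mulmxBl linearB /= -!mulmxA mxtrace_mulC -mulmxA !mxtrace_delta_mul.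
  move/eqP; rewrite subr_eq0 => /eqP eqYA.
  by rewrite [LHS]mxE [X in _ + X]mxE eqYA subrr mxE.
Qed.

Lemma nssp_map_onto : nSSP A -> forall Y, exists z, nssp_map z = Y.
Proof.
by move=> nssp; apply: onto_of_trivial_annihilator => Y; apply: nssp_map_annihilator.
Qed.

End Linearization.

(* A linear map onto n x n matrices has a right inverse which is additive and
   bounded: send Y to the corresponding combination of chosen preimages of
   the matrix units. *)
Lemma bounded_right_inverse (R : realType) p q n
    (f : {linear 'M[R]_(p, q) -> 'M[R]_n}) :
  (forall Y, exists z, f z = Y) ->
  exists G : 'M[R]_n -> 'M[R]_(p, q), exists2 c, 1 <= c &
    [/\ forall Y, f (G Y) = Y, forall Y1 Y2, G Y1 - G Y2 = G (Y1 - Y2)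
      & forall Y, `|G Y| <= c * `|Y|].
Proof.
move=> onto.
have preimage i j : exists z, f z == delta_mx i j.
  by have [z fz] := onto (delta_mx i j); exists z; apply/eqP.
pose g i j := xchoose (preimage i j).
have fg i j : f (g i j) = delta_mx i j by apply/eqP/(xchooseP (preimage i j)).
exists (fun Y => \sum_i \sum_j Y i j *: g i j), (1 + \sum_i \sum_j `|g i j|).
  by rewrite lerDl; apply: sumr_ge0 => i _; apply: sumr_ge0.
split.
- move=> Y; rewrite linear_sum [RHS]matrix_sum_delta; apply: eq_bigr => i _.
  by rewrite linear_sum; apply: eq_bigr => j _; rewrite linearZ /= fg.
- move=> Y1 Y2; rewrite -sumrB; apply: eq_bigr => i _; rewrite -sumrB.
  by apply: eq_bigr => j _; rewrite !mxE scalerBl.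
- move=> Y; apply: le_trans (ler_norm_sum _ _ _) _.
  apply: le_trans (_ : \sum_i \sum_j `|Y| * `|g i j| <= _).
    apply: ler_sum => i _; apply: le_trans (ler_norm_sum _ _ _) _.
    by apply: ler_sum => j _; rewrite normrZ ler_wpM2r // normr_entry.
  rewrite (eq_bigr (fun i => `|Y| * \sum_j `|g i j|)) => [|i _]; last first.
    by rewrite mulr_sumr.
  by rewrite -mulr_sumr mulrC ler_wpM2r // lerDr.
Qed.

(* Radii for the fixed point argument: the data C - A and M live in the ball
   of radius rho, the unknown [E | K] in the ball of radius r; d stands for
   the dimension and c for the norm of the right inverse. *)
Lemma perturbation_radii (R : realFieldType) (c d sig : R) :
  1 <= c -> 0 <= d -> 0 < sig ->
  exists r, exists2 rho, 0 < rho &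
  [/\ 0 < r, r < sig, r * d < 1,
      c * (2 * rho + d * (2 * (rho * r) + r * r)) <= r &
      c * (d * (2 * rho + 2 * r)) <= 2^-1].
Proof.
move=> c1 d0 sig0; have c0 : 0 < c := lt_le_trans ltr01 c1.
have cd0 : 0 < 8 * c * (1 + d) by rewrite !mulr_gt0 // ltr_wpDr.
pose r := Num.min (sig / 2) (8 * c * (1 + d))^-1.
have r0 : 0 < r by rewrite lt_min divr_gt0 //= invr_gt0.
have r_sig : r <= sig / 2 by rewrite ge_min lexx.
have r_cd : 8 * c * (1 + d) * r <= 1.
  by rewrite mulrC -ler_pdivlMr // div1r ge_min lexx orbT.
pose rho := r / (4 * c).
have c_rho : 4 * c * rho = r.
  by rewrite /rho mulrC -mulrA mulVf ?mulr1 // mulf_neq0 // lt0r_neq0.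
have rho0 : 0 < rho by rewrite divr_gt0 // mulr_gt0.
have dr0 : 0 <= d * r by rewrite mulr_ge0 // ltW.
have cdr : 8 * (c * d * r) <= 1 by nra.
have dr : d * r <= c * d * r by nra.
exists r, rho => //; split => //.
- by apply: le_lt_trans r_sig _; rewrite ltr_pdivrMr // ltr_pMr // ltr1n.
- nra.
- have -> : c * (2 * rho + d * (2 * (rho * r) + r * r))
      = 4 * c * rho / 2 + d * r * (4 * c * rho / 2 + c * r) by field.
  rewrite c_rho; nra.
- have -> : c * (d * (2 * rho + 2 * r)) = d * (4 * c * rho) / 2 + 2 * (c * d * r).
    by field.
  rewrite c_rho; nra.
Qed.

Section Perturbation.
Variables (R : realType) (n : nat) (A : 'M[R]_n).

Lemma normr_supp_mask E : `|supp_mask A E| <= `|E|.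
Proof.
apply: normr_mx_le => // i j; rewrite mxE.
by case: (A i j == 0); rewrite ?normr0 ?normr_entry.
Qed.

(* For z = [E0 | K], E := supp_mask A E0, this is what nssp_map z must equal
   for A + M + E to be conjugate to C through 1 + K; it depends on z only
   through terms that are quadratic or small. *)
Definition conj_defect (C M : 'M[R]_n) (z : 'M[R]_(n, n + n)) : 'M[R]_n :=
  (C - A) - M - M *m rsubmx z - supp_mask A (lsubmx z) *m rsubmx z
    + rsubmx z *m (C - A).

Lemma conj_defect_fixed C M z : nssp_map A z = conj_defect C M z ->
  (A + M + supp_mask A (lsubmx z)) *m (1%:M + rsubmx z) = (1%:M + rsubmx z) *m C.
Proof.
rewrite /nssp_map /conj_defect !mulmxDl !mulmxDr !mulmx1 !mul1mx mulmxN.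
move: (supp_mask A (lsubmx z)) (rsubmx z) => E K.
move: (A *m K) (K *m A) (M *m K) (E *m K) (K *m C) => a1 a2 a3 a4 a5 fixed.
by apply/matrixP => i j; move/matrixP: fixed => /(_ i j); rewrite !mxE; lra.
Qed.

Lemma conj_defect_bound C M z rho r :
  `|M| <= rho -> `|C - A| <= rho -> `|z| <= r ->
  `|conj_defect C M z| <= 2 * rho + n%:R * (2 * (rho * r) + r * r).
Proof.
move=> Mrho CArho zr.
have Kr : `|rsubmx z| <= r := le_trans (normr_rsubmx z) zr.
have Er : `|supp_mask A (lsubmx z)| <= r.
  exact: le_trans (normr_supp_mask _) (le_trans (normr_lsubmx z) zr).
have MK := normr_mulmx_le Mrho Kr.
have EK := normr_mulmx_le Er Kr.
have KD := normr_mulmx_le Kr CArho.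
apply: le_trans (ler_normD _ _) _.
apply: le_trans (lerD (ler_normB _ _) KD) _.
apply: le_trans (lerD (lerD (ler_normB _ _) EK) (lexx _)) _.
apply: le_trans (lerD (lerD (lerD (ler_normB _ _) MK) (lexx _)) (lexx _)) _.
lra.
Qed.

Lemma conj_defect_lipschitz C M z1 z2 rho r :
  `|M| <= rho -> `|C - A| <= rho -> `|z1| <= r -> `|z2| <= r ->
  `|conj_defect C M z1 - conj_defect C M z2|
    <= n%:R * (2 * rho + 2 * r) * `|z1 - z2|.
Proof.
move=> Mrho CArho z1r z2r; rewrite /conj_defect.
set K1 := rsubmx z1; set K2 := rsubmx z2.
set E1 := supp_mask A (lsubmx z1); set E2 := supp_mask A (lsubmx z2).
set D := C - A; set d := `|z1 - z2|.
have K1r : `|K1| <= r := le_trans (normr_rsubmx z1) z1r.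
have E2r : `|E2| <= r.
  exact: le_trans (normr_supp_mask _) (le_trans (normr_lsubmx z2) z2r).
have dK : `|K1 - K2| <= d by rewrite /K1 /K2 -linearB normr_rsubmx.
have dE : `|E1 - E2| <= d.
  by rewrite supp_maskB -linearB; apply: le_trans (normr_supp_mask _) (normr_lsubmx _).
have -> : D - M - M *m K1 - E1 *m K1 + K1 *m D - (D - M - M *m K2 - E2 *m K2 + K2 *m D)
    = - (M *m (K1 - K2)) - ((E1 - E2) *m K1 + E2 *m (K1 - K2)) + (K1 - K2) *m D.
  rewrite !mulmxBr !mulmxBl.
  move: (M *m K1) (M *m K2) (E1 *m K1) (E2 *m K2) (E2 *m K1) (K1 *m D) (K2 *m D).
  by move=> a1 a2 a3 a4 a5 a6 a7; apply/matrixP => i j; rewrite !mxE; lra.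
have MdK := normr_mulmx_le Mrho dK.
have dEK := normr_mulmx_le dE K1r.
have EdK := normr_mulmx_le E2r dK.
have dKD := normr_mulmx_le dK CArho.
apply: le_trans (ler_normD _ _) _.
apply: le_trans (lerD (ler_normB _ _) dKD) _.
apply: le_trans (lerD (lerD (lexx _) (ler_normD _ _)) (lexx _)) _.
rewrite normrN; nra.
Qed.

(* The pair z = [E | K] is the fixed point of the contraction
   z |-> G (conj_defect C M z), G a bounded right inverse of nssp_map A. *)
Lemma nssp_perturbation : (forall Y, exists z, nssp_map A z = Y) ->
  forall sig, 0 < sig -> exists2 rho, 0 < rho & forall C M,
    `|C - A| <= rho -> `|M| <= rho ->
    exists E K, [/\ supp_mask A E = E, `|E| < sig, (1%:M + K) \in unitmx &
                    (A + M + E) *m (1%:M + K) = (1%:M + K) *m C].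
Proof.
move=> onto sig sig0.
have [G [c c1 [GK GB Gc]]] := bounded_right_inverse onto.
have c0 : 0 <= c by apply: le_trans c1.
have [r [rho rho0 [r0 r_sig r_n into_ball contracting]]] :=
  perturbation_radii c1 (ler0n R n) sig0.
exists rho => // C M CArho Mrho.
pose Phi z := G (conj_defect C M z).
pose U := closed_ball (0 : 'M[R]_(n, n + n)) r.
have UE z : U z <-> `|z| <= r.
  by rewrite /U closed_ballE //= /closed_ball_ /= distrC subr0.
have PhiU z : U z -> U (Phi z).
  move/UE => zr; apply/UE; apply: le_trans (Gc _) _.
  exact: le_trans (ler_wpM2l c0 (conj_defect_bound Mrho CArho zr)) into_ball.
have Phi_contraction z1 z2 : U z1 -> U z2 ->
    `|Phi z1 - Phi z2| <= 2^-1 * `|z1 - z2|.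
  move=> /UE z1r /UE z2r; rewrite GB; apply: le_trans (Gc _) _.
  apply: le_trans (ler_wpM2l c0 (conj_defect_lipschitz Mrho CArho z1r z2r)) _.
  by rewrite mulrA ler_wpM2r.
have [z /UE zr z_fixed] : exists2 z, U z & z = Phi z.
  apply: (@contraction_fixed_point R n (n + n) U Phi PhiU 2^-1 0) => //.
  - exact: closed_ball_closed.
  - by apply/UE; rewrite normr0 ltW.
  - by rewrite invf_lt1 ?ltr1n.
exists (supp_mask A (lsubmx z)), (rsubmx z); split.
- exact: supp_mask_idem.
- exact: le_lt_trans (le_trans (normr_supp_mask _) (le_trans (normr_lsubmx _) zr)) r_sig.
- apply: unitmx_1addK; apply: le_lt_trans r_n.
  by rewrite ler_wpM2r // (le_trans (normr_rsubmx _) zr).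
- by apply: conj_defect_fixed; rewrite {1}z_fixed GK.
Qed.

End Perturbation.

Section NilpotentTriangular.
Variable F : fieldType.

Lemma row_free_col_mx r n (s : 'rV[F]_n) (t : 'M[F]_(r, n)) :
  row_free t -> ~~ (s <= t)%MS -> row_free (col_mx s t).
Proof.
move=> t_free sS; have s0 : s != 0 by apply: contraNneq sS => ->; rewrite sub0mx.
rewrite /row_free; have -> : \rank (col_mx s t) = \rank (s + t)%MS by rewrite addsmxE.
have := mxrank_sum_cap s t; have -> : \rank (s :&: t)%MS = 0%N.
  have [cap_le cap_eq] := mxrank_leqif_sup (capmxSl s t).
  rewrite rank_rV s0 in cap_le cap_eq.
  apply/eqP; rewrite -leqn0 -ltnS ltn_neqAle cap_le andbT cap_eq.
  by apply: contra sS => /submx_trans; apply; apply: capmxSr.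
by rewrite addn0 rank_rV s0 (eqP t_free) => ->.
Qed.

Lemma strict_upper_block r (w : 'M[F]_(1, r)) (U : 'M[F]_r) :
  (forall i j : 'I_r, (j <= i)%N -> U i j = 0) ->
  forall i j : 'I_(1 + r), (j <= i)%N -> block_mx (0 : 'M[F]_1) w 0 U i j = 0.
Proof.
move=> U_strict i j.
case: (splitP i) => i' ei; case: (splitP j) => j' ej.
- rewrite (_ : i = lshift r i'); last exact: val_inj.
  by rewrite (_ : j = lshift r j') ?block_mxEul ?mxE //; apply: val_inj.
- by move: ei ej; rewrite ord1 => /= -> ->.
- rewrite (_ : i = rshift 1 i'); last exact: val_inj.
  by rewrite (_ : j = lshift r j') ?block_mxEdl ?mxE //; apply: val_inj.
- rewrite (_ : i = rshift 1 i'); last exact: val_inj.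
  rewrite (_ : j = rshift 1 j'); last exact: val_inj.
  by rewrite block_mxEdr /= ltnS => /U_strict.
Qed.

Variables (n N : nat) (A : 'M[F]_n).
Hypothesis A_nil : A ^+ N = 0.

(* If u is outside the row space S, then along u, uA, uA^2, ..., which ends in
   0 <= S, there is a last vector s outside S; its image sA lies in S. *)
Lemma nilpotent_escape m (S : 'M[F]_(m, n)) (u : 'rV[F]_n) :
  ~~ (u <= S)%MS -> exists s : 'rV[F]_n, ~~ (s <= S)%MS /\ (s *m A <= S)%MS.
Proof.
suff escape d k : (k + d = N)%N -> ~~ (u *m A ^+ k <= S)%MS ->
    exists s : 'rV[F]_n, ~~ (s <= S)%MS /\ (s *m A <= S)%MS.
  by move=> uS; apply: (escape N 0); rewrite ?add0n ?expr0 ?mulmx1.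
elim: d k => [|d IH] k kd ukS.
  by move: ukS; rewrite addn0 in kd; rewrite kd A_nil mulmx0 sub0mx.
have [uk1S|uk1S] := boolP (u *m A ^+ k.+1 <= S)%MS.
  by exists (u *m A ^+ k); rewrite -mulmxA mulmxE -exprSr.
by apply: (IH k.+1) => //; rewrite addSnnS.
Qed.

(* A flag of length r stable under A: r independent rows t with t A = U t for
   a strictly upper triangular U.  It is extended by one row at the top using
   nilpotent_escape with any matrix unit outside the current span. *)
Lemma nilpotent_flag r : (r <= n)%N -> exists t : 'M[F]_(r, n), exists U : 'M[F]_r,
  [/\ row_free t, t *m A = U *m t & forall i j : 'I_r, (j <= i)%N -> U i j = 0].
Proof.
elim: r => [|r IH] rn.
  exists 0, 0; split; [by rewrite /row_free mxrank0 | by rewrite mul0mx mulmx0 | by case].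
have [t [U [t_free tA U_strict]]] := IH (ltnW rn).
have [k ekS] : exists k : 'I_n, ~~ ((delta_mx 0 k : 'rV[F]_n) <= t)%MS.
  apply/existsP; apply: contraT => /existsPn all_in.
  have : (1%:M <= t)%MS.
    by apply/row_subP => i; rewrite row1; move: (all_in i); rewrite negbK.
  by move/mxrankS; rewrite mxrank1 (eqP t_free) leqNgt rn.
have [s [sS sA]] := nilpotent_escape ekS.
have [w sAw] := submxP sA.
exists (col_mx s t), (block_mx (0 : 'M[F]_1) w 0 U); split.
- exact: row_free_col_mx.
- rewrite (mul_col_mx s t A) (mul_block_col (0 : 'M[F]_1) w 0 U s t).
  by rewrite !mul0mx !add0r sAw tA.
- exact: strict_upper_block.
Qed.

Lemma nilpotent_triangularizable : exists T : 'M[F]_n, exists U : 'M[F]_n,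
  [/\ T \in unitmx, T *m A = U *m T & forall i j : 'I_n, (j <= i)%N -> U i j = 0].
Proof.
have [t [U [t_free tA U_strict]]] := nilpotent_flag (leqnn n).
by exists t, U; rewrite -row_free_unit.
Qed.

End NilpotentTriangular.

Section Companion.
Variables (F : fieldType) (n : nat).

(* The companion matrix of the monic polynomial X^(n+1) + \sum_j c_j X^j. *)
Definition companion (c : 'I_n.+1 -> F) : 'M[F]_n.+1 :=
  \matrix_(i, j) (if (i == n :> nat) then - c j else (i.+1 == j :> nat)%:R).

Lemma char_poly_companion (q : {poly F}) : q \is monic -> size q = n.+2 ->
  char_poly (companion (fun j => q`_j)) = q.
Proof.
move=> q_monic q_size; have q_deg : (size q).-1 = n.+1 by rewrite q_size.
change (char_poly (\matrix_(i < n.+1, j < n.+1)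
   (if (i == n.+1.-1 :> nat) then - q`_j else (i.+1 == j :> nat)%:R)) = q).
by rewrite -q_deg; apply: companionmxK.
Qed.

Lemma char_poly_similar (V V' M : 'M[F]_n.+1) : V' *m V = 1%:M ->
  char_poly (V *m M *m V') = char_poly M.
Proof.
move=> V'V; rewrite /char_poly /char_poly_mx.
have -> : 'X%:M - map_mx polyC (V *m M *m V') =
    map_mx polyC V *m ('X%:M - map_mx polyC M) *m map_mx polyC V'.
  rewrite !map_mxM mulmxBr mulmxBl; congr (_ - _).
  rewrite mul_mx_scalar -scalemxAl -map_mxM (mulmx1C V'V) map_mx1.
  by rewrite scale_scalar_mx mulr1.
by rewrite !det_mulmx mulrC mulrA -det_mulmx -map_mxM V'V map_mx1 det1 mul1r.
Qed.

(* Rescaling the roots by s^-1 is a diagonal similarity of companion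
   matrices: the j-th coefficient gets multiplied by s^(n+1-j). *)
Lemma companion_scale (s : F) (c : 'I_n.+1 -> F) : s != 0 ->
  s^-1 *: companion (fun j => s ^+ (n.+1 - j) * c j)
    = diag_mx (\row_i s ^+ i) *m companion c *m diag_mx (\row_i s ^- i).
Proof.
move=> s0; apply/matrixP => i j; rewrite mul_mx_diag mul_diag_mx !mxE.
case: ifP => [/eqP i_n|_].
  have j_le : (j <= n)%N by rewrite -ltnS.
  have -> : s ^+ (n.+1 - j) = s ^+ (n - j) * s by rewrite subSn // exprSr.
  have -> : s ^+ i = s ^+ (n - j) * s ^+ j by rewrite i_n -exprD subnK.
  by field; rewrite s0 expf_neq0.
case: eqP => [<-|_]; last by rewrite !mulr0 mul0r.
by rewrite exprSr; field; rewrite s0 expf_neq0.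
Qed.

Lemma diag_pow_inv (s : F) : s != 0 ->
  diag_mx (\row_i s ^- i) *m diag_mx (\row_i s ^+ i) = 1%:M :> 'M[F]_n.+1.
Proof.
move=> s0; apply/matrixP => i j; rewrite mul_diag_mx !mxE.
by case: eqP => [->|_]; rewrite ?mulr1n ?mulVf ?expf_neq0 ?mulr0n ?mulr0.
Qed.

End Companion.

(* A strictly upper triangular matrix with nonzero superdiagonal is similar to
   the nilpotent companion matrix, through its Krylov matrix whose rows are
   e_0 H^k. *)
Section Krylov.
Variables (F : fieldType) (n : nat) (H : 'M[F]_n.+1).
Hypothesis H_strict : forall i j : 'I_n.+1, (j <= i)%N -> H i j = 0.
Hypothesis H_superdiag : forall i j : 'I_n.+1, j = i.+1 :> nat -> H i j != 0.

Lemma strict_upper_pow k (i j : 'I_n.+1) : (j < i + k)%N -> (H ^+ k) i j = 0.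
Proof.
elim: k i j => [|k IH] i j ji.
  have : i != j by apply: contraTneq ji => ->; rewrite addn0 ltnn.
  by rewrite expr0 mxE => /negbTE ->.
rewrite exprSr mxE big1 // => l _.
have [li|il] := ltnP l (i + k); first by rewrite IH // mul0r.
by rewrite H_strict ?mulr0 // -ltnS (leq_trans ji) // addnS ltnS.
Qed.

Lemma superdiag_pow (k : 'I_n.+1) : (H ^+ k) ord0 k != 0.
Proof.
case: k => k; elim: k => [|k IH] kn; first by rewrite expr0 mxE oner_eq0.
have kn' : (k < n.+1)%N by apply: ltnW.
rewrite exprSr mxE (bigD1 (Ordinal kn')) //= big1 ?addr0.
  by rewrite mulf_neq0 ?IH ?H_superdiag.
move=> l lk; have [lk'|kl] := ltnP l k; first by rewrite strict_upper_pow ?mul0r.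
have kl' : (k < l)%N.
  by rewrite ltn_neqAle kl andbT eq_sym; apply: contra lk => /eqP e; apply/eqP/val_inj.
by rewrite H_strict ?mulr0.
Qed.

Definition krylov : 'M[F]_n.+1 := \matrix_(k, j) (H ^+ k) ord0 j.

(* The Krylov matrix is upper triangular with nonzero diagonal. *)
Lemma krylov_unit : krylov \in unitmx.
Proof.
rewrite unitmxE unitfE -det_tr det_trig.
  by rewrite prodf_seq_neq0; apply/allP => i _ /=; rewrite !mxE superdiag_pow.
by apply/is_trig_mxP => i j ij; rewrite !mxE strict_upper_pow.
Qed.

Lemma krylov_conj : krylov *m H = companion (fun _ => 0) *m krylov.
Proof.
apply/matrixP => k j; rewrite !mxE.
have -> : \sum_l krylov k l * H l j = (H ^+ k.+1) ord0 j.
  by rewrite exprSr mxE; apply: eq_bigr => l _; rewrite mxE.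
have [kn|kn] := eqVneq (k : nat) n.
  rewrite big1 => [|l _]; last by rewrite mxE kn eqxx oppr0 mul0r.
  by rewrite kn strict_upper_pow.
have k1 : (k.+1 < n.+1)%N by rewrite ltn_neqAle kn ltn_ord.
rewrite (bigD1 (Ordinal k1)) //= big1 ?addr0.
  by rewrite !mxE (negbTE kn) eqxx mul1r.
move=> l lk; rewrite mxE (negbTE kn).
by case: eqP => [e|]; [case/eqP: lk; apply/val_inj | rewrite mul0r].
Qed.

End Krylov.

Lemma mul_le_of_le_div (R : realFieldType) (a x e : R) :
  0 <= a -> 0 <= e -> x <= e / (1 + a) -> a * x <= e.
Proof. by move=> a0 e0; rewrite ler_pdivlMr ?ltr_wpDr // => xe; nra. Qed.

Section NilpotentApproximation.
Variables (R : realType) (n N : nat) (A : 'M[R]_n.+1).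
Hypothesis A_nil : A ^+ N = 0.

Lemma normr_companion_sub (c : 'I_n.+1 -> R) eta : 0 <= eta ->
  (forall j, `|c j| <= eta) -> `|companion c - companion (fun _ => 0)| <= eta.
Proof.
move=> eta0 c_small; apply: normr_mx_le => // i j; rewrite !mxE.
by case: ifP => _; rewrite ?opprK ?addr0 ?normrN ?subrr ?normr0 ?c_small.
Qed.

(* A nilpotent matrix is a limit of conjugates of the nilpotent companion
   matrix: triangularize A = T^-1 U T and push the superdiagonal of U away
   from 0; the result is similar to the companion matrix through its Krylov
   matrix. *)
Lemma nilpotent_companion_approx rho : 0 < rho ->
  exists W : 'M[R]_n.+1, exists W' : 'M[R]_n.+1,
  [/\ W' *m W = 1%:M, W *m W' = 1%:M &
      `|W' *m companion (fun _ => 0) *m W - A| <= rho].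
Proof.
move=> rho0.
have [T [U [T_unit TA U_strict]]] := nilpotent_triangularizable A_nil.
pose Ti := invmx T.
pose a := n.+1%:R ^+ 2 * (`|Ti| * `|T|).
have a0 : 0 <= a by rewrite !mulr_ge0.
pose eps := rho / (1 + a).
have eps0 : 0 < eps by rewrite divr_gt0 // ltr_wpDr.
pose S : 'M[R]_n.+1 := \matrix_(i, j)
  (if (j == i.+1 :> nat) then (if 0 <= U i j then 1 else -1) else 0).
pose H := U + eps *: S.
have H_strict (i j : 'I_n.+1) : (j <= i)%N -> H i j = 0.
  move=> ji; rewrite !mxE U_strict // (_ : (j == i.+1 :> nat) = false) ?mulr0 ?addr0 //.
  by apply/negbTE; rewrite neq_ltn ltnS ji.
have H_superdiag (i j : 'I_n.+1) : j = i.+1 :> nat -> H i j != 0.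
  move=> ji; rewrite !mxE ji eqxx; case: ifP => Uij.
    by rewrite mulr1 gt_eqF // ltr_wpDl.
  by rewrite mulrN1 lt_eqF // subr_lt0 (lt_trans _ eps0) // ltNge Uij.
pose K := krylov H.
have K_unit : K \in unitmx := krylov_unit H_strict H_superdiag.
exists (K *m T), (Ti *m invmx K); split.
- by rewrite mulmxA -(mulmxA Ti) mulVmx // mulmx1 mulVmx.
- by rewrite mulmxA -(mulmxA K) mulmxV // mulmx1 mulmxV.
have -> : Ti *m invmx K *m companion (fun _ => 0) *m (K *m T) - A
    = Ti *m (eps *: S) *m T.
  rewrite mulmxA -(mulmxA _ (companion _) K) -krylov_conj // -!mulmxA (mulKmx K_unit).
  rewrite -[A](mulKmx T_unit) TA !mulmxA -/Ti -mulmxBl -mulmxBr.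
  by rewrite /H addrC addKr.
apply: le_trans (normr_mulmx3 _ _ _) _.
apply: le_trans (_ : a * eps <= _); last exact: mul_le_of_le_div (ltW rho0) (lexx _).
rewrite /a -[X in _ <= X]mulrA ler_wpM2l ?exprn_ge0 // mulrAC ler_wpM2l ?mulr_ge0 //.
rewrite normrZ gtr0_norm // -[X in _ <= X]mulr1 ler_wpM2l ?(ltW eps0) //.
apply: normr_mx_le => // i j; rewrite mxE.
by case: ifP => _; [case: ifP => _; rewrite ?normrN normr1 | rewrite normr0].
Qed.

Lemma nilpotent_near_companions rho : 0 < rho ->
  exists W : 'M[R]_n.+1, exists W' : 'M[R]_n.+1, exists2 eta, 0 < eta &
  [/\ W' *m W = 1%:M, W *m W' = 1%:M &
      forall c, (forall j, `|c j| <= eta) -> `|W' *m companion c *m W - A| <= rho].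
Proof.
move=> rho0; have rho20 : 0 < rho / 2 by rewrite divr_gt0.
have [W [W' [W'W WW' close]]] := nilpotent_companion_approx rho20.
pose a := n.+1%:R ^+ 2 * (`|W'| * `|W|).
have a0 : 0 <= a by rewrite !mulr_ge0.
pose eta := rho / 2 / (1 + a).
have eta0 : 0 < eta by rewrite divr_gt0 // ltr_wpDr.
exists W, W', eta => //; split => // c c_small.
have -> : W' *m companion c *m W - A = W' *m (companion c - companion (fun _ => 0)) *m W
    + (W' *m companion (fun _ => 0) *m W - A).
  by rewrite mulmxBr mulmxBl addrA subrK.
apply: le_trans (ler_normD _ _) _; rewrite [rho]splitr lerD //.
apply: le_trans (normr_mulmx3 _ _ _) _.
apply: le_trans (_ : a * eta <= _); last exact: mul_le_of_le_div (ltW rho20) (lexx _).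
rewrite /a -[X in _ <= X]mulrA ler_wpM2l ?exprn_ge0 // mulrAC ler_wpM2l ?mulr_ge0 //.
by apply: normr_companion_sub; rewrite ?ltW.
Qed.

End NilpotentApproximation.

Lemma small_scaling (R : realType) n (p : 'I_n.+1 -> R) eta : 0 < eta ->
  exists2 s, 0 < s & forall j : 'I_n.+1, `|s ^+ (n.+1 - j) * p j| <= eta.
Proof.
move=> eta0; pose S := 1 + \sum_j `|p j|.
have S1 : 1 <= S by rewrite lerDl sumr_ge0.
have S0 : 0 < S := lt_le_trans ltr01 S1.
pose s := Num.min 1 (eta / S).
have s0 : 0 < s by rewrite lt_min ltr01 divr_gt0.
have s1 : s <= 1 by rewrite ge_min lexx.
have sS : s * S <= eta by rewrite -ler_pdivlMr // ge_min lexx orbT.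
exists s => // j; rewrite normrM; apply: le_trans sS.
have pS : `|p j| <= S.
  rewrite /S (bigD1 j) //= addrA (le_trans (_ : _ <= 1 + `|p j|)) ?lerDr //.
  by rewrite lerDl sumr_ge0.
rewrite normrX ger0_norm ?(ltW s0) //; apply: ler_pM => //.
  exact: exprn_ge0 (ltW s0).
rewrite (_ : (n.+1 - j = (n - j).+1)%N); last by rewrite subSn // -ltnS.
by rewrite exprSr ler_piMl ?(ltW s0) // exprn_ile1 ?(ltW s0).
Qed.

Lemma char_poly_scaled_conj (F : fieldType) n (X V V' : 'M[F]_n.+1) (s : F)
    (q : {poly F}) :
  s != 0 -> q \is monic -> size q = n.+2 -> V' *m V = 1%:M ->
  X = V *m companion (fun j => s ^+ (n.+1 - j) * q`_j) *m V' ->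
  char_poly (s^-1 *: X) = q.
Proof.
move=> s0 q_monic q_size V'V ->.
rewrite scalemxAl scalemxAr companion_scale // !mulmxA -(mulmxA _ _ V').
rewrite char_poly_similar ?char_poly_companion //.
by rewrite mulmxA -(mulmxA _ V') V'V mulmx1 diag_pow_inv.
Qed.

Section SignPatterns.
Variable R : realType.

Lemma nonzero_entries_bounded_below n (A : 'M[R]_n) :
  exists2 sig, 0 < sig & forall i j, A i j != 0 -> sig <= `|A i j|.
Proof.
pose f (ij : 'I_n * 'I_n) := if A ij.1 ij.2 == 0 then 1 else `|A ij.1 ij.2|.
exists (\big[Num.min/1]_ij f ij).
  apply/bigmin_gtP; split => // -[i j] _; rewrite /f /=.
  by case: eqP => // /eqP Aij; rewrite normr_gt0.
by move=> i j Aij; apply: le_trans (bigmin_le 1 (i, j) f) _; rewrite /f /= (negbTE Aij).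
Qed.

Definition sign_unit (x : sign) : R :=
  match x with SPos => 1 | SNeg => -1 | SZero => 0 end.

Definition sign_fill n (P' : sign_pattern n) (A : 'M[R]_n) (rho : R) : 'M[R]_n :=
  \matrix_(i, j) (if A i j == 0 then sign_unit (P' i j) * rho else 0).

Lemma normr_sign_fill n (P' : sign_pattern n) (A : 'M[R]_n) rho :
  0 <= rho -> `|sign_fill P' A rho| <= rho.
Proof.
move=> rho0; apply: normr_mx_le => // i j; rewrite mxE.
case: ifP => _; last by rewrite normr0.
by case: (P' i j); rewrite /= ?mul1r ?mulN1r ?mul0r ?normrN ?normr0 ?ger0_norm.
Qed.

Lemma perturbed_in_qual_class n (P P' : sign_pattern n) (A E : 'M[R]_n) rho sig s :
  in_qual_class P A -> superpattern P P' -> 0 < rho -> 0 < s ->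
  (forall i j, A i j != 0 -> sig <= `|A i j|) ->
  supp_mask A E = E -> `|E| < sig ->
  in_qual_class P' (s^-1 *: (A + sign_fill P' A rho + E)).
Proof.
move=> AP PP' rho0 s0 A_big E_supp E_small i j.
have s0' : 0 < s^-1 by rewrite invr_gt0.
have Eij : E i j = if A i j == 0 then 0 else E i j by rewrite -{1}E_supp mxE.
rewrite !mxE; have [Aij0|Aij] := eqVneq (A i j) 0.
  rewrite Eij Aij0 eqxx !addr0 add0r.
  by case: (P' i j); rewrite /= ?mul1r ?mulN1r ?mul0r ?mulr0 // ?mulrN ?oppr_lt0 mulr_gt0.
rewrite addr0.
have Pij : P i j <> SZero by move=> Pij; move: (AP i j); rewrite Pij /= (negbTE Aij).
rewrite (PP' i j Pij).
have : `|E i j| < `|A i j|.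
  exact: le_lt_trans (normr_entry E i j) (lt_le_trans E_small (A_big i j Aij)).
rewrite ltr_norml => /andP [E_lo E_hi]; move: (AP i j) Pij.
case: (P i j) => //= Asign _.
- by rewrite gtr0_norm // in E_lo E_hi; rewrite mulr_gt0 //; lra.
- by rewrite ltr0_norm // in E_lo E_hi; rewrite pmulr_rlt0 //; lra.
Qed.

Lemma spectrally_arbitrary_size0 (P : sign_pattern 0) : spectrally_arbitrary R P.
Proof.
move=> p p_monic p_size; exists 0; split; first by case.
have -> : p = (p`_0)%:P by apply: size1_polyC; rewrite p_size.
by move/monicP: p_monic; rewrite lead_coefE p_size /= => ->; rewrite /char_poly det_mx00.
Qed.

End SignPatterns.

Theorem corollary5p6 (R : realType) (n : nat) (P : sign_pattern n)
    (A : 'M[R]_n) :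
  in_qual_class P A -> nilpotent_mx A -> nSSP A ->
  forall P' : sign_pattern n, superpattern P P' -> spectrally_arbitrary R P'.
Proof.
move=> AP [N A_nil] nssp P' PP'.
case: n P A AP A_nil nssp P' PP' => [|n] P A AP A_nil nssp P' PP'.
  exact: spectrally_arbitrary_size0.
move=> p p_monic p_size.
have [sig sig0 A_big] := nonzero_entries_bounded_below A.
have [rho rho0 perturb] := nssp_perturbation (nssp_map_onto nssp) sig0.
have [W [W' [eta eta0 [W'W WW' near]]]] := nilpotent_near_companions A_nil rho0.
have [s s0 small] := small_scaling (fun j : 'I_n.+1 => p`_j) eta0.
pose M := sign_fill P' A rho.
have [E [K [E_supp E_small K_unit conj]]] :=
  perturb _ M (near _ small) (normr_sign_fill P' A (ltW rho0)).
exists (s^-1 *: (A + M + E)); split.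
  exact: perturbed_in_qual_class AP PP' rho0 s0 A_big E_supp E_small.
apply: (@char_poly_scaled_conj _ _ _ ((1%:M + K) *m W') (W *m invmx (1%:M + K))).
- by rewrite gt_eqF.
- exact: p_monic.
- exact: p_size.
- by rewrite !mulmxA -(mulmxA W) mulVmx // mulmx1 WW'.
- by rewrite -[LHS](mulmxK K_unit) conj !mulmxA.
Qed.
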